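(* Let $U=U_kV_k\cdots U_1V_1U_0$, where the $U_i$ are incoherent unitaries and the $V_i$ are (generalised controlled) Hadamards, acting on $n\ge k$ qubits. Then the induced trace distance between the unitary channel of $U$ and that of $H^{\otimes n}$ satisfies $\mathcal{D}(U,H^{\otimes n})\ge\sqrt{1-2^{k-n}}$.
   Context: A unitary is incoherent if it has the form $\sum_x e^{i\theta_x}|\pi(x)\rangle\langle x|$ for real $\theta_x$ and a permutation $\pi$. A generalised controlled Hadamard is $\sum_{x\in S}|x\rangle\langle x|\otimes H+\sum_{y\in S^c}|y\rangle\langle y|\otimes I$. The induced trace distance between channels is $\mathcal{D}(\mathcal{E},\mathcal{V})=\max_\rho \tfrac12\|\mathcal{E}(\rho)-\mathcal{V}(\rho)\|_1$; for unitary channels this equals $\max_{|\psi\rangle}\sqrt{1-|\langle\psi|U^\dagger V|\psi\rangle|^2}$. *)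

From mathcomp Require Import all_boot all_order all_algebra all_fingroup.
From mathcomp Require Import all_classical all_reals all_analysis.
From mathcomp Require Export complex.

Set Implicit Arguments.
Unset Strict Implicit.
Unset Printing Implicit Defensive.

Import Order.TTheory GRing.Theory Num.Theory.
Local Open Scope ring_scope.
Local Open Scope complex_scope.

(* Computational basis of n qubits: 'I_(2^n); qubit j of basis state x is
   the j-th binary digit of x. *)
Definition bit (j x : nat) : bool := odd (x %/ 2 ^ j).

Definition expi (R : realType) (t : R) : R[i] := cos t +i* sin t.

Definition adj (R : realType) m n (A : 'M[R[i]]_(m, n)) : 'M[R[i]]_(n, m) :=
  (map_mx (@conjc R) A)^T.

Definition incoherent (R : realType) (n : nat) (U : 'M[R[i]]_(2 ^ n)) : Prop :=
  exists (p : {perm 'I_(2 ^ n)}) (th : 'I_(2 ^ n) -> R),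
    U = \matrix_(x, y) (if x == p y then expi (th y) else 0).

Definition hadamard_entry (R : realType) (a b : bool) : R[i] :=
  (((-1) ^+ (a && b) / Num.sqrt (2 : R)) : R)%:C.

(* Generalised controlled Hadamard with target qubit t and control set S:
   sum_{c in S} |c><c| (x) H_t + sum_{c notin S} |c><c| (x) I_t, where the
   control value c of a basis state x is x with its t-th bit cleared
   (encoded as a natural number).  S = everything gives a plain Hadamard
   on qubit t. *)
Definition gen_ctrl_hadamard (R : realType) (n : nat) (V : 'M[R[i]]_(2 ^ n))
  : Prop :=
  exists (t : 'I_n) (S : pred nat),
    V = \matrix_(x, y)
          (if [forall j : 'I_n, (j != t) ==> (bit j x == bit j y)] then
             (if S (x - bit t x * 2 ^ t)%N
              then hadamard_entry R (bit t x) (bit t y)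
              else (bit t x == bit t y)%:R)
           else 0).

Definition hadamard_n (R : realType) (n : nat) : 'M[R[i]]_(2 ^ n) :=
  \matrix_(x, y)
    ((((-1) ^+ (\sum_(j < n) (bit j x && bit j y))%N
        / Num.sqrt ((2 ^ n)%:R : R)) : R)%:C).

(* U = U_k V_k ... U_1 V_1 U_0, given U_0 and the list
   [:: (V_1, U_1); ...; (V_k, U_k)]. *)
Definition circuit (R : realType) (n : nat) (U0 : 'M[R[i]]_(2 ^ n))
  (ps : seq ('M[R[i]]_(2 ^ n) * 'M[R[i]]_(2 ^ n))) : 'M[R[i]]_(2 ^ n) :=
  foldl (fun acc p => p.2 *m p.1 *m acc) U0 ps.

(* Induced trace distance between the unitary channels of U and V, via the
   formula  D = max_{|psi>} sqrt(1 - |<psi|U^dag V|psi>|^2)  (unit psi). *)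
Definition chan_dist (R : realType) (n : nat) (U V : 'M[R[i]]_(2 ^ n)) : R :=
  sup [set d : R | exists psi : 'cV[R[i]]_(2 ^ n),
         (adj psi *m psi) 0 0 = 1 /\
         d = Num.sqrt (1 - Normc.normc ((adj psi *m (adj U *m V) *m psi) 0 0)
                           ^+ 2)].

From mathcomp Require Import all_boot all_order all_algebra all_fingroup.
From mathcomp Require Import all_classical all_reals all_analysis.
From mathcomp Require Import complex.

(* Incoherent unitaries have columns of l1-norm 1, and a generalised
   controlled Hadamard has columns of l1-norm at most sqrt 2 (either two
   nonzero entries of modulus 1/sqrt 2 or a single entry 1).  Column
   l1-norms are submultiplicative, so every column of U has l1-norm at most
   2^(k/2).  All entries of H^(x)n have modulus 2^(-n/2), hence for the basis
   state |0> we get |<0|U^dag H^(x)n|0>| <= 2^((k-n)/2), which bounds the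
   distance from below by sqrt(1 - 2^(k-n)). *)

Import Order.TTheory GRing.Theory Num.Theory.

Lemma bitS j x : bit j.+1 x = bit j x./2.
Proof. by rewrite /bit expnS divnMA divn2. Qed.

Lemma binary_expansion {n x : nat} : (x < 2 ^ n)%N ->
  x = (\sum_(j < n) bit j x * 2 ^ j)%N.
Proof.
elim: n x => [|n IH] x x_lt; first by rewrite big_ord0; case: x x_lt.
have half_lt : (x./2 < 2 ^ n)%N by rewrite -divn2 ltn_divLR // -expnSr.
rewrite big_ord_recl /= /bit expn0 divn1 muln1.
rewrite {1}(divn_eq x 2) addnC modn2 divn2 (IH _ half_lt) big_distrl /=.
congr addn; apply: eq_bigr => j _.
by rewrite /bump /= add1n -/(bit j.+1 x) bitS expnS -mulnA (mulnC 2).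
Qed.

Lemma eq_from_bits {n x y : nat} : (x < 2 ^ n)%N -> (y < 2 ^ n)%N ->
  (forall j, (j < n)%N -> bit j x = bit j y) -> x = y.
Proof.
move=> x_lt y_lt eq_bits.
rewrite (binary_expansion x_lt) (binary_expansion y_lt).
by apply: eq_bigr => j _; rewrite eq_bits.
Qed.

Lemma clear_bit_expansion n (t : 'I_n) x : (x < 2 ^ n)%N ->
  (x - bit t x * 2 ^ t)%N = (\sum_(j < n | j != t) bit j x * 2 ^ j)%N.
Proof. by move=> x_lt; rewrite {1}(binary_expansion x_lt) (bigD1 t) //= addKn. Qed.

Definition agree_off {n : nat} (t : 'I_n) (x y : nat) : bool :=
  [forall j : 'I_n, (j != t) ==> (bit j x == bit j y)].

Section AgreeOff.
Context {n : nat} {t : 'I_n}.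

Lemma agree_offP {x y : nat} :
  reflect (forall j : 'I_n, j != t -> bit j x = bit j y) (agree_off t x y).
Proof.
apply: (iffP forallP) => [h j jt | h j]; first exact: eqP (implyP (h j) jt).
by apply/implyP => /h ->.
Qed.

Lemma agree_off_refl x : agree_off t x x.
Proof. by apply/agree_offP. Qed.

Lemma agree_off_clear_bit {x y : 'I_(2 ^ n)} : agree_off t x y ->
  (x - bit t x * 2 ^ t)%N = (y - bit t y * 2 ^ t)%N.
Proof.
move=> /agree_offP agree; rewrite !clear_bit_expansion //.
by apply: eq_bigr => j /agree ->.
Qed.

Lemma agree_off_inj {x y : 'I_(2 ^ n)} :
  agree_off t x y -> bit t x = bit t y -> x = y.
Proof.
move=> /agree_offP agree eq_t; apply: val_inj.
apply: (eq_from_bits (ltn_ord x) (ltn_ord y)) => j j_lt.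
by case: (eqVneq (Ordinal j_lt) t) eq_t => [<- | /agree ->].
Qed.

Lemma card_agree_off (y : 'I_(2 ^ n)) :
  (#|[pred x : 'I_(2 ^ n) | agree_off t x y]| <= 2)%N.
Proof.
rewrite -(@card_in_imset _ _ (fun x : 'I_(2 ^ n) => bit t x)).
  by rewrite (leq_trans (max_card _)) ?card_bool.
move=> x x' /= agree_x agree_x' eq_t; apply: agree_off_inj eq_t.
by apply/agree_offP => j jt; rewrite (agree_offP agree_x) ?(agree_offP agree_x').
Qed.

End AgreeOff.

Local Open Scope ring_scope.
Local Open Scope complex_scope.

Definition col_l1_bounded {R : numDomainType} {m n : nat} (A : 'M[R]_(m, n)) (c : R) :=
  forall j, \sum_i `|A i j| <= c.

Lemma col_l1_bounded_mul (R : numDomainType) m n p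
    (A : 'M[R]_(m, n)) (B : 'M[R]_(n, p)) a b :
  0 <= a -> col_l1_bounded A a -> col_l1_bounded B b ->
  col_l1_bounded (A *m B) (a * b).
Proof.
move=> a_ge0 boundA boundB j.
apply: le_trans (_ : \sum_i \sum_k `|A i k| * `|B k j| <= _).
  apply: ler_sum => i _; rewrite mxE; apply: le_trans (ler_norm_sum _ _ _) _.
  by apply: ler_sum => k _; rewrite normrM.
rewrite exchange_big /=; apply: le_trans (_ : \sum_k a * `|B k j| <= _).
  by apply: ler_sum => k _; rewrite -mulr_suml ler_wpM2r.
by rewrite -mulr_sumr ler_wpM2l.
Qed.

Section QuantumGates.
Variable R : realType.

Lemma normC_real (x : R) : `|x%:C| = `|x|%:C.
Proof. by rewrite normc_def /= expr0n /= addr0 sqrtr_sqr. Qed.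

Lemma normC_normc (z : R[i]) : (Normc.normc z)%:C = `|z|.
Proof. by case: z => a b; rewrite normc_def. Qed.

Lemma norm_expi (t : R) : `|expi t| = 1.
Proof. by rewrite normc_def /= cos2Dsin2 sqrtr1. Qed.

Lemma norm_hadamard_entry a b :
  `|hadamard_entry R a b| = (Num.sqrt (2 : R))^-1%:C.
Proof.
rewrite normC_real normrM normrX normrN1 expr1n mul1r normfV.
by rewrite ger0_norm ?sqrtr_ge0.
Qed.

Lemma norm_hadamard_n n x y :
  `|hadamard_n R n x y| = (Num.sqrt (2 ^ n)%:R)^-1%:C.
Proof.
rewrite mxE normC_real normrM normrX normrN1 expr1n mul1r normfV.
by rewrite ger0_norm ?sqrtr_ge0.
Qed.

Lemma col_l1_bounded_incoherent n (U : 'M[R[i]]_(2 ^ n)) :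
  incoherent U -> col_l1_bounded U 1.
Proof.
case=> p [th ->] j; rewrite (bigD1 (p j)) //= big1 ?addr0.
  by rewrite mxE eqxx norm_expi.
by move=> i /negbTE i_neq; rewrite mxE i_neq normr0.
Qed.

Lemma col_l1_bounded_gen_ctrl_hadamard n (V : 'M[R[i]]_(2 ^ n)) :
  gen_ctrl_hadamard V -> col_l1_bounded V (Num.sqrt (2 : R))%:C.
Proof.
case=> t [S ->] y.
(* Column y is supported on the at most two states agreeing with y off the
   target qubit t, and they all share the control value of y. *)
have s_gt0 : 0 < Num.sqrt (2 : R) by rewrite sqrtr_gt0.
under eq_bigr => x _ do rewrite mxE -/(agree_off t x y) (fun_if Num.norm) normr0.
rewrite -big_mkcond /=.
under eq_bigr => x agree_xy do rewrite (agree_off_clear_bit agree_xy).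
case: (S _).
  under eq_bigr => x _ do rewrite norm_hadamard_entry.
  rewrite sumr_const -rmorphMn lecR -mulr_natr.
  apply: le_trans (_ : (Num.sqrt 2)^-1 * 2%:R <= _).
    by rewrite ler_wpM2l ?invr_ge0 ?sqrtr_ge0 // ler_nat; exact: card_agree_off.
  by rewrite -[X in _ * X](sqr_sqrtr (ler0n R 2)) expr2 mulKf ?gt_eqF.
rewrite (bigD1 y) ?agree_off_refl //= eqxx normr1 big1 ?addr0.
  by rewrite lecR -{1}sqrtr1 ler_sqrt // ler1n.
move=> x /andP [agree_xy x_neq]; case: eqP => [/(agree_off_inj agree_xy) x_eq | _].
  by rewrite x_eq eqxx in x_neq.
by rewrite normr0.
Qed.

Lemma col_l1_bounded_circuit n (U0 : 'M[R[i]]_(2 ^ n)) ps c :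
  (forall p, p \in ps -> gen_ctrl_hadamard p.1 /\ incoherent p.2) ->
  0 <= c -> col_l1_bounded U0 c ->
  col_l1_bounded (circuit U0 ps) ((Num.sqrt (2 : R))%:C ^+ size ps * c).
Proof.
elim: ps U0 c => [|p ps IH] U0 c gates c_ge0 boundU0; first by rewrite mul1r.
have [had_p incoh_p] := gates p (mem_head _ _).
have s_ge0 : 0 <= (Num.sqrt (2 : R))%:C by rewrite ler0c sqrtr_ge0.
rewrite exprSr -mulrA; apply: IH.
- by move=> q q_ps; apply: gates; rewrite in_cons q_ps orbT.
- exact: mulr_ge0.
rewrite -[X in col_l1_bounded _ (X * c)]mul1r.
apply: col_l1_bounded_mul => //; first by rewrite mul1r.
apply: col_l1_bounded_mul => //.
  exact: col_l1_bounded_incoherent incoh_p.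
exact: col_l1_bounded_gen_ctrl_hadamard had_p.
Qed.

Lemma norm_adj_mul_hadamard_n n (U : 'M[R[i]]_(2 ^ n)) c i j :
  col_l1_bounded U c ->
  `|(adj U *m hadamard_n R n) i j| <= c * (Num.sqrt (2 ^ n)%:R)^-1%:C.
Proof.
move=> boundU; rewrite mxE; apply: le_trans (ler_norm_sum _ _ _) _.
under eq_bigr => k _ do rewrite normrM norm_hadamard_n !mxE normcJ.
by rewrite -mulr_suml ler_wpM2r ?ler0c ?invr_ge0 ?sqrtr_ge0.
Qed.

Lemma chan_dist_ge_basis n (U V : 'M[R[i]]_(2 ^ n)) x b :
  0 <= b -> `|(adj U *m V) x x| <= b%:C ->
  Num.sqrt (1 - b ^+ 2) <= chan_dist U V.
Proof.
move=> b_ge0 overlap_le; set psi : 'cV[R[i]]_(2 ^ n) := delta_mx x 0.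
have adj_psi : adj psi = delta_mx 0 x.
  by apply/matrixP => a c; rewrite !mxE conjc_nat andbC.
have quad_psi M : (adj psi *m M *m psi) 0 0 = M x x.
  by rewrite adj_psi -rowE -colE !mxE.
rewrite /chan_dist; set E := (X in sup X).
have E_psi : E (Num.sqrt (1 - Normc.normc ((adj U *m V) x x) ^+ 2)).
  exists psi; split; last by rewrite quad_psi.
  by rewrite -[adj psi]mulmx1 quad_psi mxE eqxx.
have E_ub : has_ubound E.
  exists 1 => _ [phi [_ ->]].
  by rewrite -[X in _ <= X]sqrtr1 ler_wsqrtr // gerBl sqr_ge0.
apply: le_trans (ub_le_sup E_ub E_psi); rewrite ler_wsqrtr // lerB //.
have normc_ge0 : 0 <= Normc.normc ((adj U *m V) x x).
  by rewrite -ler0c normC_normc.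
by rewrite ler_pXn2r ?nnegrE // -lecR normC_normc.
Qed.

Lemma sqr_circuit_overlap {n k : nat} : (k <= n)%N ->
  (Num.sqrt (2 : R) ^+ k * (Num.sqrt (2 ^ n)%:R)^-1) ^+ 2 = 2 ^- (n - k).
Proof.
move=> k_le_n; rewrite exprMn exprVn sqr_sqrtr ?ler0n // -exprM mulnC exprM.
rewrite sqr_sqrtr ?ler0n // natrX -[in LHS](subnK k_le_n) exprD invfM mulrCA.
by rewrite mulfV ?mulr1 // expf_neq0 // pnatr_eq0.
Qed.

End QuantumGates.

Theorem lemma4 (R : realType) (n : nat) (U0 : 'M[R[i]]_(2 ^ n))
  (ps : seq ('M[R[i]]_(2 ^ n) * 'M[R[i]]_(2 ^ n))) :
  (size ps <= n)%N ->
  incoherent U0 ->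
  (forall p, p \in ps -> gen_ctrl_hadamard p.1 /\ incoherent p.2) ->
  Num.sqrt (1 - (2 : R) ^- (n - size ps)) <=
    chan_dist (circuit U0 ps) (hadamard_n R n).
Proof.
move=> k_le_n incoh_U0 gates.
set b := Num.sqrt (2 : R) ^+ size ps * (Num.sqrt (2 ^ n)%:R)^-1.
have boundU : col_l1_bounded (circuit U0 ps) ((Num.sqrt (2 : R))%:C ^+ size ps).
  rewrite -[X in col_l1_bounded _ X]mulr1.
  by apply: col_l1_bounded_circuit => //; exact: col_l1_bounded_incoherent.
have two_pow_gt0 : (0 < 2 ^ n)%N by rewrite expn_gt0.
rewrite -(sqr_circuit_overlap R k_le_n) -/b.
apply: (@chan_dist_ge_basis R n _ _ (Ordinal two_pow_gt0)).
  by rewrite mulr_ge0 ?exprn_ge0 ?invr_ge0 ?sqrtr_ge0.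
rewrite /b rmorphM rmorphXn /=.
exact: norm_adj_mul_hadamard_n.
Qed.
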